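(* Let $A$ and $B$ be $n\times n$ binary matrices (entries in $\mathbb{Z}_2$) with zero diagonal. The facets-pairing structures $\mathcal{F}_A$ and $\mathcal{F}_B$ on $\mathcal{C}^n$ are equivalent if and only if there is an $n\times n$ permutation matrix $P$ with $B=P^{-1}AP$.
   Context: $[\pm n]=\{\pm1,\dots,\pm n\}$, $\mathcal{C}^n=\{x\in\mathbb{R}^n: -\tfrac14\le x_i\le\tfrac14\}$; $\mathbf{F}(i)$, $\mathbf{F}(-i)$ ($1\le i\le n$) are the facets in $\{x_i=\tfrac14\}$, $\{x_i=-\tfrac14\}$. For a binary matrix $A$ write $A^i_k$ for its $(i,k)$ entry (viewed as $0$ or $1$). The facets-pairing structure $\mathcal{F}_A$ pairs $\mathbf{F}(j)$ with $\mathbf{F}(-j)$ via $\tau^A_j:\mathbf{F}(j)\to\mathbf{F}(-j)$, $\tau^A_j(x_1,\dots,x_n)=(y_1,\dots,y_n)$ with $y_{|j|}=-x_{|j|}$ and $y_k=(-1)^{A^{|j|}_k}x_k$ for $k\ne|j|$. Two facets-pairing structures given by pairings $\mathbf{F}(j)\mapsto\mathbf{F}(\omega(j))$ with maps $\tau_j$, and $\mathbf{F}(j)\mapsto\mathbf{F}(\omega'(j))$ with maps $\tau'_j$, are equivalent if there is a symmetry $h$ of $\mathcal{C}^n$ (Euclidean isometry preserving $\mathcal{C}^n$) such that $\tau_j=h^{-1}\circ\tau'_{j'}\circ h$ on $\mathbf{F}(j)$ for every $j\in[\pm n]$, where $\mathbf{F}(j')=h(\mathbf{F}(j))$. *)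

(* The ambient field is an arbitrary real field R
   (the paper's R is the instance R = the real numbers). *)
From HB Require Import structures.
From mathcomp Require Import all_boot all_order all_algebra all_fingroup.
Set Implicit Arguments. Unset Strict Implicit. Unset Printing Implicit Defensive.
Import Order.TTheory GRing.Theory Num.Theory.
Local Open Scope ring_scope.

Section Cube.
Variables (R : realFieldType) (n : nat).

Definition sqnorm (v : 'rV[R]_n) : R := \sum_(i < n) (v 0 i) ^+ 2.

Definition isometry (h : 'rV[R]_n -> 'rV[R]_n) : Prop :=
  forall x y, sqnorm (h x - h y) = sqnorm (x - y).

Definition inCube (x : 'rV[R]_n) : Prop :=
  forall i, - (4%:R)^-1 <= x 0 i <= (4%:R)^-1.

Definition cube_symmetry (h : 'rV[R]_n -> 'rV[R]_n) : Prop :=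
  isometry h /\
  (forall y, inCube y <-> exists x, inCube x /\ h x = y).

(* Signed indices [±n]: (false, i) is +(i+1), (true, i) is -(i+1). *)
Definition sidx := (bool * 'I_n)%type.

Definition inFacet (j : sidx) (x : 'rV[R]_n) : Prop :=
  inCube x /\ x 0 j.2 = (if j.1 then - (4%:R)^-1 else (4%:R)^-1).

(* A facets-pairing structure: a pairing omega of [±n] and maps tau j
   (tau j is meant as a map F(j) -> F(omega j); it is given as a map on
   R^n, only its restriction to F(j) matters). *)
Record pairing := Pairing {
  omega : sidx -> sidx;
  tau : sidx -> 'rV[R]_n -> 'rV[R]_n }.

Definition tauA (A : 'M['F_2]_n) (j : sidx) (x : 'rV[R]_n) : 'rV[R]_n :=
  \row_k (if k == j.2 then - x 0 k
          else if A j.2 k != 0 then - x 0 k else x 0 k).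

Definition pairingA (A : 'M['F_2]_n) : pairing :=
  Pairing (fun j => (~~ j.1, j.2)) (tauA A).

(* Equivalence of facets-pairing structures: a symmetry h such that for
   every j, h(F(j)) = F(j') and tau_j = h^-1 o tau'_j' o h on F(j)
   (equivalently, h o tau_j = tau'_j' o h on F(j), h being bijective). *)
Definition equiv_pairing (S S' : pairing) : Prop :=
  exists h, cube_symmetry h /\
    forall j : sidx, exists j' : sidx,
      (forall y, inFacet j' y <-> exists x, inFacet j x /\ h x = y) /\
      (forall x, inFacet j x -> h (tau S j x) = tau S' j' (h x)).

End Cube.

From HB Require Import structures.
From mathcomp Require Import all_boot all_order all_algebra all_fingroup.
From mathcomp Require Import lra.
(* Imported last, so that its [isometry] is not shadowed by the one of
   mathcomp's sesquilinear forms. *)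
Import Order.TTheory GRing.Theory Num.Theory.
Set Implicit Arguments. Unset Strict Implicit.
Local Open Scope ring_scope.

(* An equivalence h is an isometry, so g := h - h 0 is linear and orthogonal.
   If h maps the facet F(i) onto F(j'), the |j'|-th coordinate is constant on
   F(i), hence vanishes on g e_k for k <> i; setting phi(i) := |j'| gives a
   permutation of the coordinates (h is onto the cube) with g e_k nonzero at
   phi(k).  Comparing h o tau^A_i with tau^B_j' o h at c e_i and c e_i + c e_k,
   whose difference is c e_k, the sign change of tau^A_i at k and that of
   tau^B_j' at phi(k) agree, i.e. A_ik = B_phi(i)phi(k).  Conversely,
   permuting the coordinates by s conjugates F_A into F_B. *)

Section Isometry.
Variables (R : realFieldType) (n : nat).
Implicit Types (u v w : 'rV[R]_n) (a : R).

Definition dot u v : R := \sum_i u 0 i * v 0 i.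

Lemma sqnormE u : sqnorm u = dot u u.
Proof. by apply: eq_bigr => i _; rewrite expr2. Qed.

Lemma dotC u v : dot u v = dot v u.
Proof. by apply: eq_bigr => i _; rewrite mulrC. Qed.

Lemma dotDl u v w : dot (u + v) w = dot u w + dot v w.
Proof. by rewrite /dot -big_split; apply: eq_bigr => i _; rewrite mxE mulrDl. Qed.

Lemma dotNl u v : dot (- u) v = - dot u v.
Proof. by rewrite /dot -sumrN; apply: eq_bigr => i _; rewrite mxE mulNr. Qed.

Lemma dotZl a u v : dot (a *: u) v = a * dot u v.
Proof. by rewrite /dot mulr_sumr; apply: eq_bigr => i _; rewrite mxE mulrA. Qed.

Lemma dotDr u v w : dot w (u + v) = dot w u + dot w v.
Proof. by rewrite dotC dotDl !(dotC w). Qed.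

Lemma dotNr u v : dot v (- u) = - dot v u.
Proof. by rewrite dotC dotNl dotC. Qed.

Lemma dotZr a u v : dot v (a *: u) = a * dot v u.
Proof. by rewrite dotC dotZl dotC. Qed.

Lemma sqnormB u v : sqnorm (u - v) = sqnorm u + sqnorm v - (dot u v) *+ 2.
Proof.
rewrite !sqnormE dotDl !dotDr !dotNl !dotNr opprK (dotC v u) mulr2n opprD.
by rewrite (addrC (- dot u v) (dot v v)) addrACA.
Qed.

Lemma sqnorm0 : sqnorm (0 : 'rV[R]_n) = 0.
Proof. by rewrite /sqnorm big1 // => i _; rewrite mxE expr0n. Qed.

Lemma sqnorm_eq0 u : (sqnorm u == 0) = (u == 0).
Proof.
apply/idP/eqP => [|->]; last by rewrite sqnorm0.
rewrite psumr_eq0 => [/allP u0|i _]; last exact: sqr_ge0.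
by apply/rowP => i; rewrite mxE; apply/eqP; rewrite -sqrf_eq0 (implyP (u0 i _)) ?mem_index_enum.
Qed.

Lemma dot_preserving_linear (g : 'rV[R]_n -> 'rV[R]_n) :
  (forall u v, dot (g u) (g v) = dot u v) ->
  forall a u v, g (a *: u + v) = a *: g u + g v.
Proof.
move=> g_dot a u v.
have sqnorm_g z : sqnorm (g z - a *: g u - g v) = sqnorm (z - a *: u - v).
  by rewrite !sqnormE !dotDl !dotDr !dotNl !dotNr !dotZl !dotZr !g_dot.
move: (sqnorm_g (a *: u + v)); rewrite (addrC (a *: u)) addrK subrr sqnorm0.
by move/eqP; rewrite sqnorm_eq0 -addrA -opprD subr_eq0 => /eqP.
Qed.

Variable h : 'rV[R]_n -> 'rV[R]_n.

Definition centered v := h v - h 0.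

Lemma centered_sub u v : centered u - centered v = h u - h v.
Proof. by rewrite /centered opprB addrA subrK. Qed.

Hypothesis h_iso : isometry h.

Lemma centered_sqnorm u : sqnorm (centered u) = sqnorm u.
Proof. by rewrite /centered h_iso subr0. Qed.

Lemma centered_dot u v : dot (centered u) (centered v) = dot u v.
Proof.
have := h_iso u v; rewrite -centered_sub (sqnormB (centered u)) sqnormB.
by rewrite !centered_sqnorm => /addrI/oppr_inj/eqP; rewrite eqr_pMn2r // => /eqP.
Qed.

Lemma centered0 : centered 0 = 0.
Proof. exact: subrr. Qed.

Lemma centeredD u v : centered (u + v) = centered u + centered v.
Proof. by rewrite -[u]scale1r dot_preserving_linear ?scale1r //; exact: centered_dot. Qed.

Lemma centeredZ a u : centered (a *: u) = a *: centered u.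
Proof.
by rewrite -[a *: u]addr0 dot_preserving_linear ?centered0 ?addr0 //; exact: centered_dot.
Qed.

Lemma centeredB u v : centered (u - v) = centered u - centered v.
Proof. by rewrite centeredD -scaleN1r centeredZ scaleN1r. Qed.

Lemma centered_sum v : centered v = \sum_k v 0 k *: centered 'e_k.
Proof.
rewrite {1}(row_sum_delta v) (big_morph centered centeredD centered0).
by apply: eq_bigr => k _; rewrite centeredZ.
Qed.

End Isometry.

Section CubeFacets.
Variables (R : realFieldType) (n : nat).
Local Notation c := ((4%:R : R)^-1).
Implicit Types (u v : 'rV[R]_n) (a : R) (M : 'M['F_2]_n).

Lemma scale_delta_mxE a (k l : 'I_n) :
  (a *: ('e_k : 'rV[R]_n)) 0 l = if l == k then a else 0.
Proof. by rewrite !mxE eqxx; case: (l == k); rewrite ?mulr1 ?mulr0. Qed.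

Lemma inCube_coords v : (forall l, v 0 l \in [:: 0; c; - c]) -> inCube v.
Proof.
have c_gt0 : 0 < c by rewrite invr_gt0 ltr0n.
move=> v_coords l; move: (v_coords l); rewrite !inE => /or3P[] /eqP ->;
  by apply/andP; split; lra.
Qed.

Lemma inCube0 : inCube (0 : 'rV[R]_n).
Proof. by apply: inCube_coords => l; rewrite mxE inE eqxx. Qed.

Lemma inCube_delta k : inCube (c *: ('e_k : 'rV[R]_n)).
Proof.
by apply: inCube_coords => l; rewrite scale_delta_mxE; case: (l == k); rewrite !inE eqxx ?orbT.
Qed.

Lemma inFacet_delta i : inFacet (false, i) (c *: ('e_i : 'rV[R]_n)).
Proof. by split; [exact: inCube_delta | rewrite scale_delta_mxE eqxx]. Qed.

Lemma inFacet_delta_shift i k :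
  k != i -> inFacet (false, i) (c *: 'e_i + c *: ('e_k : 'rV[R]_n)).
Proof.
move=> ki; split; last by rewrite mxE !scale_delta_mxE eqxx eq_sym (negbTE ki) addr0.
apply: inCube_coords => l; rewrite mxE !scale_delta_mxE.
have [->|li] := eqVneq l i; first by rewrite eq_sym (negbTE ki) addr0 !inE eqxx orbT.
by rewrite add0r; case: (l == k); rewrite !inE eqxx ?orbT.
Qed.

Definition tau_flip M (p r : 'I_n) : bool := (r == p) || (M p r != 0).

Lemma tauAE M j v : tauA M j v = \row_r ((-1) ^+ tau_flip M j.2 r * v 0 r).
Proof.
apply/rowP => r; rewrite !mxE /tau_flip.
by case: (r == j.2); case: (M j.2 r != 0); rewrite /= ?mulN1r ?mul1r.
Qed.

Lemma tauAB M j u v : tauA M j (u - v) = tauA M j u - tauA M j v.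
Proof. by rewrite !tauAE; apply/rowP => r; rewrite !mxE mulrBr. Qed.

Lemma tauA_delta M j a k :
  tauA M j (a *: 'e_k) = ((-1) ^+ tau_flip M j.2 k * a) *: 'e_k.
Proof.
rewrite tauAE; apply/rowP => r; rewrite mxE !scale_delta_mxE.
by have [->|] := eqVneq r k; rewrite ?mulr0.
Qed.

End CubeFacets.

Section FacetPairing.
Variables (R : realFieldType) (n : nat) (A B : 'M['F_2]_n).
Variable h : 'rV[R]_n -> 'rV[R]_n.
Hypothesis h_iso : isometry h.
Local Notation g := (centered h).
Local Notation c := ((4%:R : R)^-1).

Variables (i : 'I_n) (j' : sidx n).
Hypothesis h_facet :
  forall y, inFacet j' y <-> exists x, inFacet (false, i) x /\ h x = y.
Hypothesis h_tau : forall x, inFacet (false, i) x ->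
  h (tauA A (false, i) x) = tauA B j' (h x).

Let delta_shift k : c *: 'e_k = (c *: 'e_i + c *: 'e_k) - c *: ('e_i : 'rV[R]_n).
Proof. by rewrite addrC addKr. Qed.

Lemma centered_facet_coord k : k != i -> g 'e_k 0 j'.2 = 0.
Proof.
move=> ki.
have h_coord x : inFacet (false, i) x -> h x 0 j'.2 = (if j'.1 then - c else c).
  by move=> Fx; have [] := (h_facet (h x)).2 (ex_intro _ x (conj Fx erefl)).
have : (g (c *: 'e_k)) 0 j'.2 = 0.
  rewrite delta_shift centeredB // centered_sub !mxE.
  by rewrite (h_coord _ (inFacet_delta_shift _ ki)) (h_coord _ (inFacet_delta _ i)) subrr.
by rewrite centeredZ // mxE => /eqP; rewrite mulf_eq0 invr_eq0 pnatr_eq0 => /eqP.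
Qed.

Lemma centered_facet_flip k r : k != i -> r != j'.2 -> g 'e_k 0 r != 0 ->
  (A i k != 0) = (B j'.2 r != 0).
Proof.
move=> ki rj gkr.
have tau_g : g (tauA A (false, i) (c *: 'e_k)) = tauA B j' (g (c *: 'e_k)).
  rewrite delta_shift tauAB !centeredB // !centered_sub.
  by rewrite (h_tau (inFacet_delta_shift _ ki)) (h_tau (inFacet_delta _ i)) tauAB.
have c_neq0 : c != 0 by rewrite invr_eq0 pnatr_eq0.
move: tau_g; rewrite tauA_delta tauAE !centeredZ //; move: (g 'e_k) gkr => G Gr.
move=> /rowP/(_ r); rewrite !mxE -mulrA => /(mulIf (mulf_neq0 c_neq0 Gr)).
by move/signr_inj; rewrite /tau_flip /= (negbTE ki) (negbTE rj).
Qed.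

End FacetPairing.

Lemma F2_eq (a b : 'F_2) : (a != 0) = (b != 0) -> a = b.
Proof. by case: a b => [[|[|?]] ?] [[|[|?]] ?] //= _; apply/val_inj. Qed.

Section FacetMap.
Variables (R : realFieldType) (n : nat) (A B : 'M['F_2]_n).
Variable h : 'rV[R]_n -> 'rV[R]_n.
Hypothesis h_iso : isometry h.
Hypothesis h_onto : forall y, inCube y -> exists x, h x = y.
Local Notation g := (centered h).

Variable phi : 'I_n -> 'I_n.
Hypothesis phi_coord : forall i k, k != i -> g 'e_k 0 (phi i) = 0.
Hypothesis phi_flip : forall i k r, k != i -> r != phi i -> g 'e_k 0 r != 0 ->
  (A i k != 0) = (B (phi i) r != 0).

Lemma facet_map_inj : injective phi.
Proof.
move=> i1 i2 phi12; apply/eqP/negPn/negP => i12.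
have g_coord k : g 'e_k 0 (phi i1) = 0.
  have [->|ki1] := eqVneq k i1; last exact: phi_coord.
  by rewrite phi12 phi_coord // eq_sym.
have g_coord_all v : g v 0 (phi i1) = 0.
  by rewrite centered_sum // summxE big1 // => k _; rewrite mxE g_coord mulr0.
have [x1 hx1] := h_onto (inCube_delta _ (phi i1)).
have [x0 hx0] := h_onto (@inCube0 R n).
move: (g_coord_all (x1 - x0)); rewrite centeredB // centered_sub hx1 hx0 subr0.
by rewrite scale_delta_mxE eqxx => /eqP; rewrite invr_eq0 pnatr_eq0.
Qed.

Lemma centered_facet_map_diag k : g 'e_k 0 (phi k) != 0.
Proof.
have [r gkr] : exists r, g 'e_k 0 r != 0.
  apply/existsP; apply: contraT; rewrite negb_exists => /forallP gk0.
  have : g 'e_k == 0 by apply/eqP/rowP => l; rewrite [RHS]mxE; apply/eqP/negPn.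
  rewrite -sqnorm_eq0 centered_sqnorm // sqnorm_eq0 => /eqP/rowP/(_ k)/eqP.
  by rewrite !mxE !eqxx oner_eq0.
have [i ri] : exists i, r = phi i.
  by exists ((perm facet_map_inj)^-1 r)%g; rewrite -[LHS](permKV (perm facet_map_inj)) permE.
move: gkr; rewrite ri; have [-> //|ik] := eqVneq i k.
by rewrite phi_coord ?eqxx // eq_sym.
Qed.

Lemma facet_map_conj : (forall i, A i i = 0) -> (forall i, B i i = 0) ->
  forall i k, B (phi i) (phi k) = A i k.
Proof.
move=> A0 B0 i k; have [->|ki] := eqVneq k i; first by rewrite A0 B0.
apply/esym/F2_eq/phi_flip; rewrite ?(inj_eq facet_map_inj) //.
exact: centered_facet_map_diag.
Qed.

End FacetMap.

Lemma equiv_pairingA_relabel (R : realFieldType) n (A B : 'M['F_2]_n) :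
  (forall i, A i i = 0) -> (forall i, B i i = 0) ->
  equiv_pairing (pairingA R A) (pairingA R B) ->
  exists s : 'S_n, forall i k, B (s i) (s k) = A i k.
Proof.
move=> A0 B0 [h [[h_iso h_cube] h_pair]].
have h_onto y : inCube y -> exists x, h x = y.
  by move/h_cube => [x [_ <-]]; exists x.
have /fin_all_exists [phi phiP] i : exists r,
    (forall k, k != i -> centered h 'e_k 0 r = 0) /\
    (forall k r', k != i -> r' != r -> centered h 'e_k 0 r' != 0 ->
       (A i k != 0) = (B r r' != 0)).
  have [j' [j'_facet j'_tau]] := h_pair (false, i).
  exists j'.2; split=> [k|k r']; first exact: centered_facet_coord.
  exact: centered_facet_flip.
have phi_coord i := (phiP i).1; have phi_flip i := (phiP i).2.
exists (perm (facet_map_inj h_iso h_onto phi_coord)) => i k; rewrite !permE.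
exact: (facet_map_conj h_iso h_onto phi_coord phi_flip A0 B0).
Qed.

Section Relabel.
Variables (R : realFieldType) (n : nat).
Implicit Types (x y : 'rV[R]_n) (s : 'S_n).

Lemma isometry_col_perm s : isometry (@col_perm R 1 n s).
Proof.
move=> x y; rewrite -(raddfB (@col_perm R 1 n s)) /sqnorm [RHS](reindex_inj (@perm_inj _ s)).
by apply: eq_bigr => l _; rewrite !mxE.
Qed.

Lemma inCube_col_perm s x : inCube (col_perm s x) <-> inCube x.
Proof.
split=> x_cube l; last by rewrite mxE.
by move: (x_cube (s^-1 l)%g); rewrite mxE permKV.
Qed.

Lemma inFacet_col_perm s b i x : inFacet (b, i) (col_perm s x) <-> inFacet (b, s i) x.
Proof. by rewrite /inFacet inCube_col_perm /= mxE. Qed.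

Lemma col_permKV s x : col_perm s (col_perm s^-1 x) = x.
Proof. by rewrite -col_permM mulgV col_perm1. Qed.

Variables (s : 'S_n) (A B : 'M['F_2]_n).
Hypothesis sAB : forall i k, B i k = A (s i) (s k).

Lemma tauA_col_perm b i x :
  col_perm s (tauA A (b, s i) x) = tauA B (b, i) (col_perm s x).
Proof. by apply/rowP => l; rewrite !mxE /= sAB (inj_eq (@perm_inj _ s)). Qed.

Lemma equiv_pairingA_col_perm : equiv_pairing (pairingA R A) (pairingA R B).
Proof.
exists (col_perm s); split.
  split=> [|y]; first exact: isometry_col_perm.
  split=> [y_cube|[x [x_cube <-]]]; last exact/inCube_col_perm.
  by exists (col_perm s^-1 y); rewrite col_permKV inCube_col_perm.
move=> [b i]; exists (b, (s^-1 i)%g); split=> [y|x Fx]; last first.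
  by rewrite /= -tauA_col_perm permKV.
rewrite -{1}(col_permKV s y) inFacet_col_perm permKV.
split=> [Fy|[x [Fx <-]]]; first by exists (col_perm s^-1 y); rewrite col_permKV.
by rewrite -col_permM mulVg col_perm1.
Qed.

End Relabel.

Lemma invmx_perm_mx (R : comUnitRingType) n (s : 'S_n) :
  invmx (perm_mx s) = perm_mx s^-1 :> 'M[R]_n.
Proof.
rewrite -[LHS]mulmx1 -(perm_mx1 R n) -(mulgV s) perm_mxM mulmxA.
by rewrite mulVmx ?unitmx_perm // mul1mx.
Qed.

Lemma conj_perm_mxE (R : comUnitRingType) n (s : 'S_n) (M : 'M[R]_n) i k :
  (invmx (perm_mx s) *m M *m perm_mx s) i k = M (s^-1 i)%g (s^-1 k)%g.
Proof.
by rewrite invmx_perm_mx -row_permE -[s in perm_mx s]invgK -col_permE !mxE.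
Qed.

Theorem mainTheorem9 (R : realFieldType) (n : nat) (A B : 'M['F_2]_n) :
  (forall i, A i i = 0) -> (forall i, B i i = 0) ->
  (equiv_pairing (pairingA R A) (pairingA R B) <->
   exists P : 'M['F_2]_n, (exists s : 'S_n, P = perm_mx s) /\
     B = invmx P *m A *m P).
Proof.
move=> A0 B0; split=> [/(equiv_pairingA_relabel A0 B0) [s sAB] | [_ [[s ->] ->]]].
  exists (perm_mx s); split; first by exists s.
  apply/matrixP => i k; rewrite conj_perm_mxE.
  by rewrite -{1}(permKV s i) -{1}(permKV s k) sAB.
by apply: (@equiv_pairingA_col_perm R n s^-1) => i k; rewrite conj_perm_mxE.
Qed.
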